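(* Let $(X,\mathcal{A})$ be a resolvable design with $v$ points, $b$ blocks of size $k$, $r$ parallel classes and $b_r=b/r$ blocks per parallel class. Consider the coded caching system with $N$ files, $b$ caches each of size $M=Nk/v$ files, and $K=b$ users each having access to exactly one cache (user $j$ to the cache of block $A_j$), with the placement and delivery described in the context. If $N\geq K$ and the demands are distinct, the scheme achieves the worst-case rate $R=\frac{rk\binom{b_r}{2}}{v}$, and the number of users benefited in each transmission (the gain) is $2$.
   Context: A resolvable design $(X,\mathcal{A})$: $X$ a finite set of $v$ points, $\mathcal{A}$ a collection of $b$ blocks each of size $k$, partitioned into $r$ parallel classes, each being a set of $b_r=v/k$ pairwise disjoint blocks with union $X$. Placement: each file $W_i$ ($i\in[N]$, unit size) is split into $v$ equal subfiles $W_{i,x}$, $x\in X$; the cache of block $A_j$ stores $W_{i,x}$ for all $x\in A_j$ and all $i$. Delivery: user $m$ demands $W_{d_m}$. For each parallel class and each pair of distinct blocks $C_{i},C_{j}$ in it, let the users of these two caches be $m$ (cache $C_i$) and $m'$ (cache $C_j$); set $f_m=C_j=\{y_{m,1},\dots,y_{m,k}\}$ and $f_{m'}=C_i=\{y_{m',1},\dots,y_{m',k}\}$ (fixed orderings), and transmit $W_{d_m,y_{m,s}}\oplus W_{d_{m'},y_{m',s}}$ for each $s\in[k]$, each of size $1/v$ file. The rate is the total amount transmitted in units of files; a user is benefited by a transmission if it obtains a subfile of its demanded file from it. *)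

From mathcomp Require Import all_boot all_order all_algebra.
Set Implicit Arguments. Unset Strict Implicit. Unset Printing Implicit Defensive.

(* Points: a finite type X (v = #|X|).  Blocks / caches / users indexed by 'I_b.
   Parallel classes indexed by 'I_r; cls j is the parallel class of block A j. *)
Definition resolvable_design (X : finType) (b r k br : nat)
  (A : 'I_b -> {set X}) (cls : 'I_b -> 'I_r) : Prop :=
  [/\ (forall j, #|A j| = k),
      (forall c : 'I_r, #|[set j | cls j == c]| = br),
      (forall i j, i != j -> cls i = cls j -> [disjoint A i & A j]) &
      (forall (c : 'I_r) (x : X), exists j, cls j = c /\ x \in A j)].

(* y j : 'I_k -> X is a fixed ordering of the k points of block A j. *)
Definition valid_orderings (X : finType) (b k : nat)
  (A : 'I_b -> {set X}) (y : 'I_b -> 'I_k -> X) : Prop :=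
  forall j, injective (y j) /\ (forall s, y j s \in A j).

(* A subfile W_{i,x} is labelled by (i, x); a transmission W_p (+) W_q by (p, q). *)
Definition subfile (N : nat) (X : finType) := ('I_N * X)%type.
Definition transmission (N : nat) (X : finType) := (subfile N X * subfile N X)%type.

(* Delivery: for each parallel class c, each unordered pair of distinct blocks
   C_i, C_j (i < j) of class c, users m = i (cache C_i) and m' = j (cache C_j),
   f_m = C_j, f_m' = C_i, and for each s send W_{d_m, y_{m,s}} (+) W_{d_m', y_{m',s}}. *)
Definition delivery (X : finType) (b r k N : nat) (cls : 'I_b -> 'I_r)
  (y : 'I_b -> 'I_k -> X) (d : 'I_b -> 'I_N) : seq (transmission N X) :=
  flatten [seq
    flatten [seq [seq ((d p.1, y p.2 s), (d p.2, y p.1 s)) | s <- enum 'I_k]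
            | p <- [seq p <- [seq (i, j) | i <- enum 'I_b, j <- enum 'I_b]
                      | [&& cls p.1 == c, cls p.2 == c & (p.1 < p.2)%N]]]
    | c <- enum 'I_r].

(* Rate: total transmitted amount in files; each transmission has size 1/v. *)
Definition rate (X : finType) (N : nat) (T : seq (transmission N X)) : rat :=
  ((size T)%:R / (#|X|)%:R)%R.

(* User m (with cache A m, storing W_{i,x} for all i and x in A m) decodes the
   subfile sf from transmission t if sf is one summand of t and the other summand
   is in its cache. *)
Definition decodes (X : finType) (b N : nat) (A : 'I_b -> {set X}) (m : 'I_b)
  (t : transmission N X) (sf : subfile N X) : bool :=
  ((t.1 == sf) && (t.2.2 \in A m)) || ((t.2 == sf) && (t.1.2 \in A m)).

Definition benefited (X : finType) (b N : nat) (A : 'I_b -> {set X})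
  (d : 'I_b -> 'I_N) (m : 'I_b) (t : transmission N X) : bool :=
  [exists x, (x \notin A m) && decodes A m t (d m, x)].

From mathcomp Require Import all_boot all_order all_algebra.
From mathcomp Require Import zify.

Set Implicit Arguments.
Unset Strict Implicit.
Unset Printing Implicit Defensive.

(* The transmissions are indexed by a parallel class c, a pair i < j of blocks
   of c and a position s < k, so there are r * 'C(b_r, 2) * k of them.  The
   transmission for (i, j, s) is W_{d_i, y_{j,s}} (+) W_{d_j, y_{i,s}}: since
   blocks of one class are disjoint, user i caches the second summand but not
   the first and user j the other way round, while no other user has a demand
   among its two summands, so exactly two users benefit.  Every point x outside
   A_m lies in the block A_j of the class of A_m that contains it, and
   x = y_{j,s} for some s since y_j enumerates A_j; the transmission for the
   pair {m, j} and position s then delivers W_{d_m, x} to user m. *)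

Lemma size_flatten_map_const (T U : Type) (f : T -> seq U) (s : seq T) n :
  (forall x, size (f x) = n) -> size (flatten (map f s)) = size s * n.
Proof. by move=> size_f; elim: s => //= x s IHs; rewrite size_cat size_f IHs. Qed.

Lemma size_filter_pairs (T1 T2 : finType) (P : pred (T1 * T2)) :
  size [seq p <- [seq (x1, x2) | x1 <- enum T1, x2 <- enum T2] | P p] = #|P|.
Proof.
(* The enumeration on the left is the one defining [Finite.enum] on [T1 * T2]. *)
by rewrite size_filter unlock size_filter unlock.
Qed.

Lemma card_ltn_pairs n (S : {set 'I_n}) :
  #|[set p : 'I_n * 'I_n | [&& p.1 \in S, p.2 \in S & p.1 < p.2]]| = 'C(#|S|, 2).
Proof.
rewrite -cards_draws -(@card_in_imset _ _ (fun p => [set p.1; p.2])).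
  apply: eq_card => B; rewrite inE; apply/imsetP/andP.
    case=> -[i j]; rewrite inE /= => /and3P[iS jS lt_ij] ->.
    by rewrite cards2 neq_ltn lt_ij subUset !sub1set iS jS.
  case=> sBS /cards2P[i [j [ne_ij defB]]].
  have [iS jS] : i \in S /\ j \in S.
    by rewrite !(subsetP sBS) // defB !inE eqxx ?orbT.
  have [lt_ij | lt_ji] : i < j \/ j < i by move: ne_ij; rewrite neq_ltn => /orP.
    by exists (i, j); rewrite // inE iS jS.
  by exists (j, i); rewrite ?inE ?iS ?jS // defB setUC.
move=> [i j] [i' j']; rewrite !inE /= => /and3P[_ _ lt_ij] /and3P[_ _ lt_ij'].
move=> /setP eqB; move: (eqB i) (eqB j); rewrite !inE !eqxx /= ?orbT.
by move=> /esym/orP[]/eqP ei /esym/orP[]/eqP ej; subst => //; lia.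
Qed.

Lemma mem_codom_card (T T' : finType) (f : T -> T') (A : {set T'}) :
  injective f -> (forall t, f t \in A) -> #|A| = #|T| -> {subset A <= codom f}.
Proof.
move=> inj_f fA cardA x xA.
have sub_fA : codom f \subset A by apply/subsetP => _ /codomP[t ->].
have card_fA : #|codom f| = #|A| by rewrite card_codom.
by rewrite (subset_cardP card_fA sub_fA).
Qed.

Lemma card_benefited_swap (X : finType) (b N : nat) (A : 'I_b -> {set X})
    (d : 'I_b -> 'I_N) i j xi xj :
  injective d -> [disjoint A i & A j] -> xi \in A i -> xj \in A j ->
  #|[set m | benefited A d m ((d i, xj), (d j, xi))]| = 2.
Proof.
move=> inj_d disj_ij xiA xjA.
have xiNAj : xi \notin A j by rewrite (disjointFr disj_ij).
have xjNAi : xj \notin A i by rewrite (disjointFl disj_ij).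
have ne_ij : i != j by apply: contraNneq xjNAi => ->.
suff -> : [set m | benefited A d m ((d i, xj), (d j, xi))] = [set i; j].
  by rewrite cards2 ne_ij.
apply/setP => m; rewrite !inE /benefited /decodes /=; apply/existsP/orP.
  by case=> x /andP[_ /orP[] /andP[/eqP[/inj_d -> _] _]]; [left | right].
by case=> /eqP ->; [exists xj | exists xi]; rewrite ?xiA ?xjA ?xiNAj ?xjNAi eqxx ?orbT.
Qed.

Section Delivery.

Variables (X : finType) (b r k N : nat).
Variables (A : 'I_b -> {set X}) (cls : 'I_b -> 'I_r) (y : 'I_b -> 'I_k -> X).
Variable d : 'I_b -> 'I_N.

Lemma size_delivery br :
  (forall c, #|[set j | cls j == c]| = br) ->
  size (delivery cls y d) = r * k * 'C(br, 2).
Proof.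
move=> card_cls; rewrite (@size_flatten_map_const _ _ _ _ ('C(br, 2) * k)).
  by rewrite size_enum_ord mulnA [r * k * _]mulnAC.
move=> c; rewrite (@size_flatten_map_const _ _ _ _ k); last first.
  by move=> p; rewrite size_map size_enum_ord.
rewrite size_filter_pairs -(card_cls c) -card_ltn_pairs.
by congr (_ * _); apply: eq_card => p; rewrite !inE.
Qed.

Lemma mem_delivery t :
  t \in delivery cls y d <->
  exists i j s, [/\ cls i = cls j, i < j & t = ((d i, y j s), (d j, y i s))].
Proof.
split.
  case/flatten_mapP=> c _ /flatten_mapP[[i j]].
  rewrite mem_filter /= => /andP[/and3P[/eqP ci /eqP cj lt_ij] _] /mapP[s _ ->].
  by exists i, j, s; split; rewrite ?ci ?cj.
case=> i [j [s [cij lt_ij ->]]].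
apply/flatten_mapP; exists (cls i); first by rewrite mem_enum.
apply/flatten_mapP; exists (i, j); last by apply: map_f; rewrite mem_enum.
by rewrite mem_filter /= cij eqxx lt_ij; apply/allpairsP; exists (i, j); rewrite !mem_enum.
Qed.

Lemma delivery_decodes :
  (forall j, #|A j| = k) ->
  (forall (c : 'I_r) (x : X), exists j, cls j = c /\ x \in A j) ->
  valid_orderings A y ->
  forall m x, x \notin A m -> exists2 t, t \in delivery cls y d & decodes A m t (d m, x).
Proof.
move=> cardA cover y_ok m x xNAm.
have [j [cjm xAj]] := cover (cls m) x.
have /codomP[s ->] : x \in codom (y j).
  by case: (y_ok j) => inj_y yA; apply: mem_codom_card; rewrite ?cardA ?card_ord.
have ymA : y m s \in A m by case: (y_ok m).
have [lt_mj | lt_jm | eq_mj] := ltngtP m j.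
- exists ((d m, y j s), (d j, y m s)); last by rewrite /decodes /= eqxx ymA.
  by apply/mem_delivery; exists m, j, s.
- exists ((d j, y m s), (d m, y j s)); last by rewrite /decodes /= eqxx ymA orbT.
  by apply/mem_delivery; exists j, m, s.
- by move: xNAm; rewrite (val_inj eq_mj) xAj.
Qed.

End Delivery.

Theorem theorem2 (X : finType) (b r k br N : nat)
  (A : 'I_b -> {set X}) (cls : 'I_b -> 'I_r) (y : 'I_b -> 'I_k -> X)
  (d : 'I_b -> 'I_N) :
  @resolvable_design X b r k br A cls ->
  valid_orderings A y ->
  (b <= N)%N ->
  injective d ->
  let T := delivery cls y d in
  [/\ rate T = ((r * k * 'C(br, 2))%:R / (#|X|)%:R)%R,
      (forall (m : 'I_b) (x : X),
          x \in A m \/ exists2 t, t \in T & decodes A m t (d m, x)) &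
      (forall t, t \in T -> #|[set m | benefited A d m t]| = 2)].
Proof.
(* N >= b only makes distinct demands possible; the proof uses injectivity of d. *)
move=> [cardA card_cls disj cover] y_ok _ inj_d T; split.
- by rewrite /rate /T (size_delivery y d card_cls).
- move=> m x; have [xAm | xNAm] := boolP (x \in A m); first by left.
  by right; apply: delivery_decodes.
- move=> t /mem_delivery[i [j [s [cij lt_ij ->]]]].
  apply: card_benefited_swap => //; first by apply: disj; rewrite // neq_ltn lt_ij.
    by case: (y_ok i).
  by case: (y_ok j).
Qed.
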